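(* Let $\varphi=\frac{1+\sqrt5}{2}$ and $\theta_0=(\theta_1,\theta_2,\theta_3)=\left(\frac12,\frac1\varphi,\frac1{\varphi^2}\right)$. Let $m=(0,y,z)$ be a point of the face $X=0$ of the unit cube with well defined orbit, identified with $(y,z)\in\mathbb T^2=(\mathbb R/\mathbb Z)^2$. Then for every $k\ge 0$, the $(k+1)$-th return word of $a$ in the billiard word $u=f_{\theta_0}(m)$ is $\Phi\big(m+2k\theta_2(1,-1)\bmod 1\big)$.
   Context: $f_{\theta_0}(m)\in\{a,b,c\}^{\mathbb N}$ records, in order, the successive intersections of the half line $m+\mathbb R_+\theta_0$ with the planes $X=n$ (letter $a$), $Y=n$ (letter $b$), $Z=n$ (letter $c$), $n\in\mathbb Z$; for $m$ on the face $X=0$ it begins with $a$. The $j$-th return word of $a$ in $u$ is the factor of $u$ starting at the $j$-th occurrence of $a$ and ending just before the $(j+1)$-th occurrence of $a$. The face $X=0$ (identified with $\mathbb T^2$ via $(y,z)$) is partitioned, up to boundaries, into seven sets, for $(y,z)\in[0,1)^2$: $P_{a_7}$: $y<4-2\varphi,\ z<2\varphi-3$; $P_{a_4}$: $y>4-2\varphi,\ z<2\varphi-3$; $P_{a_2}$: $y<4-2\varphi,\ 2\varphi-3<z<(2-\varphi)+y/\varphi$; $P_{a_1}$: $y<4-2\varphi,\ z>(2-\varphi)+y/\varphi$; $P_{a_5}$: $y>4-2\varphi,\ 2\varphi-3<z<(3-2\varphi)+y/\varphi$; $P_{a_3}$: $y>4-2\varphi,\ (3-2\varphi)+y/\varphi<z<(2-\varphi)+y/\varphi$;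 $P_{a_6}$: $y>4-2\varphi,\ z>(2-\varphi)+y/\varphi$. For a point $q$ of the face, $\Phi(q):=\Phi(a_i)$ where $q\in P_{a_i}$, with $\Phi(a_1)=acb$, $\Phi(a_2)=abc$, $\Phi(a_3)=abcb$, $\Phi(a_4)=abb$, $\Phi(a_5)=abbc$, $\Phi(a_6)=acbb$, $\Phi(a_7)=ab$ (this is the first return word of $a$ in $f_{\theta_0}(q)$). *)

From Stdlib Require Import Reals Lra List.
Open Scope R_scope.

Definition phi : R := (1 + sqrt 5) / 2.
Definition theta1 : R := 1 / 2.
Definition theta2 : R := 1 / phi.
Definition theta3 : R := 1 / (phi ^ 2).

Inductive letter : Set := la | lb | lc.

(* [hit y z t l]: the half line m + R_+ theta0, m = (0,y,z), meets at time
   t >= 0 a plane X = n (l = la), Y = n (l = lb) or Z = n (l = lc), n in Z. *)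
Definition hit (y z t : R) (l : letter) : Prop :=
  0 <= t /\ exists n : Z,
    match l with
    | la => 0 + t * theta1 = IZR n
    | lb => y + t * theta2 = IZR n
    | lc => z + t * theta3 = IZR n
    end.

(* well defined orbit: the half line never meets two planes of different
   directions at the same time (i.e. never passes through an edge). *)
Definition well_defined_orbit (y z : R) : Prop :=
  forall t l1 l2, hit y z t l1 -> hit y z t l2 -> l1 = l2.

Definition billiard_word (y z : R) (u : nat -> letter) : Prop :=
  exists tau : nat -> R,
    (forall n, tau n < tau (S n)) /\
    (forall n, hit y z (tau n) (u n)) /\
    (forall t l, hit y z t l -> exists n, tau n = t /\ u n = l).

Definition is_a (l : letter) : bool := match l with la => true | _ => false end.

Definition count_a (u : nat -> letter) (p : nat) : nat :=
  length (filter (fun i => is_a (u i)) (seq 0 p)).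

(* position p is the (j+1)-th occurrence of a in u *)
Definition occ_a (u : nat -> letter) (p j : nat) : Prop :=
  u p = la /\ count_a u p = j.

(* w is the j-th return word of a in u (j >= 1): the factor of u starting at
   the j-th occurrence of a and ending just before the (j+1)-th one. *)
Definition return_word (u : nat -> letter) (j : nat) (w : list letter) : Prop :=
  exists p q, occ_a u p (j - 1)%nat /\ occ_a u q j /\
              w = map u (seq p (q - p)).

(* Phi on the face X = 0, points (y,z) in [0,1)^2; the seven pieces P_{a_i}
   are open (boundaries excluded). [Phi_rel y z w] means (y,z) lies in some
   P_{a_i} and w = Phi(a_i). *)
Definition Phi_rel (y z : R) (w : list letter) : Prop :=
  0 <= y < 1 /\ 0 <= z < 1 /\
  ( (y < 4 - 2*phi /\ z > (2 - phi) + y / phi /\ w = la :: lc :: lb :: nil)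
 \/ (y < 4 - 2*phi /\ 2*phi - 3 < z /\ z < (2 - phi) + y / phi
               /\ w = la :: lb :: lc :: nil)
 \/ (y > 4 - 2*phi /\ (3 - 2*phi) + y / phi < z /\ z < (2 - phi) + y / phi
               /\ w = la :: lb :: lc :: lb :: nil)
 \/ (y > 4 - 2*phi /\ z < 2*phi - 3 /\ w = la :: lb :: lb :: nil)
 \/ (y > 4 - 2*phi /\ 2*phi - 3 < z /\ z < (3 - 2*phi) + y / phi
               /\ w = la :: lb :: lb :: lc :: nil)
 \/ (y > 4 - 2*phi /\ z > (2 - phi) + y / phi /\ w = la :: lc :: lb :: lb :: nil)
 \/ (y < 4 - 2*phi /\ z < 2*phi - 3 /\ w = la :: lb :: nil) ).

(* Along the orbit X = t/2, so the letters a are read exactly at the even times 2k, and the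
   (k+1)-th return word of a is a followed by the letters read during (2k, 2k+2). Shifting time
   by 2k moves the starting point to (y + 2k theta2, z + 2k theta3), which is the face point
   m + 2k theta2 (1,-1) mod 1 because theta3 = 1 - theta2; so it is enough to read the first
   window from an arbitrary face point (y,z). There, since 1/theta2 = phi and 1/theta3 = phi + 1,
   the only possible crossings are X = 1 at time 2, Y = 1 and Y = 2 at times phi (1-y) and
   phi (2-y), and Z = 1 at time (phi+1)(1-z). The piece P_{a_i} is exactly the region where
   those crossing times that fall before 2 are ordered as the letters of Phi(a_i); on its
   boundary two of these times coincide, which a well-defined orbit forbids. *)

From Stdlib Require Import Reals Lra Lia List Sorted.
Import ListNotations.
Open Scope R_scope.

Lemma phi_sq : phi * phi = phi + 1.
Proof. unfold phi. pose proof (sqrt_sqrt 5 ltac:(lra)). nra. Qed.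

Lemma phi_bounds : 3 / 2 < phi < 2.
Proof.
  unfold phi. pose proof (sqrt_sqrt 5 ltac:(lra)). pose proof (sqrt_pos 5).
  split; nra.
Qed.

Lemma phi_theta2 : phi * theta2 = 1.
Proof. unfold theta2. pose proof phi_bounds. field. lra. Qed.

Lemma theta2_eq : theta2 = phi - 1.
Proof. pose proof phi_bounds. pose proof phi_theta2. pose proof phi_sq. nra. Qed.

Lemma theta3_eq : theta3 = 2 - phi.
Proof.
  unfold theta3. pose proof phi_bounds. simpl. rewrite Rmult_1_r, phi_sq.
  replace (2 - phi) with ((phi + 1) * (2 - phi) / (phi + 1)) by (field; lra).
  replace ((phi + 1) * (2 - phi)) with 1 by (pose proof phi_sq; nra).
  reflexivity.
Qed.

Lemma div_phi x : x / phi = x * (phi - 1).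
Proof. rewrite <- theta2_eq. unfold theta2, Rdiv. ring. Qed.

Definition enumerates {A : Type} (H : R -> A -> Prop) (tau : nat -> R) (u : nat -> A) : Prop :=
  (forall n, tau n < tau (S n)) /\
  (forall n, H (tau n) (u n)) /\
  (forall t l, H t l -> exists n, tau n = t /\ u n = l).

Lemma enumerates_shift {A : Type} (H : R -> A -> Prop) tau u c :
  enumerates H tau u -> enumerates (fun s l => H (c + s) l) (fun n => tau n - c) u.
Proof.
  intros (Hinc & Hhit & Hall). repeat split.
  - intros n. specialize (Hinc n). lra.
  - intros n. replace (c + (tau n - c)) with (tau n) by ring. apply Hhit.
  - intros t l Htl. destruct (Hall _ _ Htl) as (n & Hn & Hu).
    exists n. split; [lra | exact Hu].
Qed.

Section Enumeration.

Variables (A : Type) (H : R -> A -> Prop) (tau : nat -> R) (u : nat -> A).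
Hypothesis Henum : enumerates H tau u.

Lemma enum_increasing n m : (n < m)%nat -> tau n < tau m.
Proof.
  destruct Henum as [Hinc _].
  induction 1 as [|m _ IH]; [apply Hinc | specialize (Hinc m); lra].
Qed.

Lemma enum_le n m : (n <= m)%nat -> tau n <= tau m.
Proof.
  intros [Hlt | ->]%Nat.lt_eq_cases; [left; apply enum_increasing, Hlt | right; reflexivity].
Qed.

Lemma enum_index_lt n m : tau n < tau m -> (n < m)%nat.
Proof. intros Hlt. apply Nat.nle_gt. intros Hle. apply enum_le in Hle. lra. Qed.

Lemma enum_inj n m : tau n = tau m -> n = m.
Proof.
  intros E. destruct (Nat.lt_trichotomy n m) as [Hlt | [Heq | Hlt]]; trivial;
    apply enum_increasing in Hlt; lra.
Qed.

Lemma enum_succ_le p t l : H t l -> tau p < t -> tau (S p) <= t.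
Proof.
  intros Htl Hlt. destruct Henum as (_ & _ & Hall).
  destruct (Hall _ _ Htl) as (m & <- & _).
  apply enum_le, enum_index_lt, Hlt.
Qed.

Lemma enum_window p t1 l1 ws :
  H t1 l1 ->
  Sorted Rlt (tau p :: map fst ws ++ [t1]) ->
  (forall x, In x ws -> H (fst x) (snd x)) ->
  (forall t l, H t l -> tau p < t < t1 -> In (t, l) ws) ->
  map (fun i => (tau i, u i)) (seq (S p) (length ws)) = ws /\
  tau (S p + length ws)%nat = t1.
Proof.
  destruct Henum as (Hinc & Hhit & _).
  revert p. induction ws as [|[t l] ws IH]; intros p Ht1 Hsorted Hws Hcomplete; simpl in *.
  - split; [reflexivity|]. rewrite Nat.add_0_r.
    apply Sorted_extends in Hsorted; [|exact Rlt_trans].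
    assert (Hlt : tau p < t1) by (inversion Hsorted; assumption).
    destruct (enum_succ_le p t1 l1 Ht1 Hlt) as [Hbefore | ->]; [exfalso|reflexivity].
    apply (Hcomplete _ _ (Hhit (S p))). split; [apply Hinc | exact Hbefore].
  - apply Sorted_StronglySorted in Hsorted as Hstrong; [|exact Rlt_trans].
    apply StronglySorted_inv in Hstrong as [_ Hfirst].
    rewrite Forall_forall in Hfirst.
    apply Sorted_inv in Hsorted as [Hsorted _].
    apply Sorted_StronglySorted in Hsorted as Hstrong; [|exact Rlt_trans].
    apply StronglySorted_inv in Hstrong as [_ Hafter].
    rewrite Forall_forall in Hafter.
    assert (Htp : tau p < t) by (apply Hfirst; left; reflexivity).
    assert (Htt1 : t < t1) by (apply Hafter, in_or_app; right; left; reflexivity).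
    assert (Hnext : tau (S p) = t /\ u (S p) = l).
    { assert (Hle := enum_succ_le p t l (Hws _ (or_introl eq_refl)) Htp).
      destruct (Hcomplete _ _ (Hhit (S p))) as [E | Hin].
      - split; [apply Hinc | lra].
      - injection E as -> ->. split; reflexivity.
      - exfalso. enough (t < tau (S p)) by lra.
        apply Hafter, in_or_app. left. apply (in_map fst) in Hin. exact Hin. }
    destruct Hnext as [Et Eu].
    destruct (IH (S p)) as [Hmap Hend].
    + exact Ht1.
    + rewrite Et. exact Hsorted.
    + intros x Hx. apply Hws. right. exact Hx.
    + intros t' l' Ht' Hrange. rewrite Et in Hrange.
      destruct (Hcomplete _ _ Ht') as [E | Hin]; [split; lra| |exact Hin].
      injection E as <- <-. lra.
    + split.
      * rewrite Hmap, Et, Eu. reflexivity.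
      * rewrite <- Hend. f_equal. lia.
Qed.

End Enumeration.

Definition line_hit (y z s : R) (l : letter) : Prop :=
  exists n : Z,
    match l with
    | la => 0 + s * theta1 = IZR n
    | lb => y + s * theta2 = IZR n
    | lc => z + s * theta3 = IZR n
    end.

Lemma hit_line_hit y z t l : hit y z t l <-> 0 <= t /\ line_hit y z t l.
Proof. reflexivity. Qed.

Lemma line_hit_translate y z s l (i j : Z) :
  line_hit (y + IZR i) (z + IZR j) s l <-> line_hit y z s l.
Proof.
  split; intros [n Hn]; destruct l.
  - exists n; exact Hn.
  - exists (n - i)%Z; rewrite minus_IZR; lra.
  - exists (n - j)%Z; rewrite minus_IZR; lra.
  - exists n; exact Hn.
  - exists (n + i)%Z; rewrite plus_IZR; lra.
  - exists (n + j)%Z; rewrite plus_IZR; lra.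
Qed.

Lemma line_hit_delay y z s l (k : nat) :
  line_hit y z (2 * INR k + s) l <->
  line_hit (y + 2 * INR k * theta2) (z + 2 * INR k * theta3) s l.
Proof.
  unfold line_hit, theta1. rewrite INR_IZR_INZ.
  split; intros [n Hn]; destruct l.
  - exists (n - Z.of_nat k)%Z; rewrite minus_IZR; lra.
  - exists n; lra.
  - exists n; lra.
  - exists (n + Z.of_nat k)%Z; rewrite plus_IZR; lra.
  - exists n; lra.
  - exists n; lra.
Qed.

Lemma line_hit_shift y z s l (k : nat) :
  line_hit y z (2 * INR k + s) l <->
  line_hit (frac_part (y + 2 * INR k * theta2)) (frac_part (z - 2 * INR k * theta2)) s l.
Proof.
  set (i := Int_part (y + 2 * INR k * theta2)).
  set (j := (Int_part (z - 2 * INR k * theta2) + 2 * Z.of_nat k)%Z).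
  replace (frac_part (y + 2 * INR k * theta2)) with (y + 2 * INR k * theta2 + IZR (- i)).
  2:{ unfold frac_part, i. rewrite opp_IZR. ring. }
  replace (frac_part (z - 2 * INR k * theta2)) with (z + 2 * INR k * theta3 + IZR (- j)).
  2:{ unfold frac_part, j. rewrite opp_IZR, plus_IZR, mult_IZR, <- INR_IZR_INZ, theta3_eq, theta2_eq.
      simpl. ring. }
  rewrite line_hit_translate. apply line_hit_delay.
Qed.

Definition face_candidates (y z : R) : list (R * letter) :=
  [(2, la); (phi * (1 - y), lb); (phi * (2 - y), lb); ((phi + 1) * (1 - z), lc)].

Lemma face_candidate_hit y z x :
  In x (face_candidates y z) -> line_hit y z (fst x) (snd x).
Proof.
  pose proof phi_theta2 as E2. rewrite theta2_eq in E2.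
  unfold line_hit, theta1. rewrite theta2_eq, theta3_eq.
  intros [<- | [<- | [<- | [<- | []]]]]; simpl.
  - exists 1%Z. simpl. lra.
  - exists 1%Z. replace (phi * (1 - y) * (phi - 1)) with ((1 - y) * (phi * (phi - 1))) by ring.
    rewrite E2. simpl. ring.
  - exists 2%Z. replace (phi * (2 - y) * (phi - 1)) with ((2 - y) * (phi * (phi - 1))) by ring.
    rewrite E2. simpl. ring.
  - exists 1%Z. replace ((phi + 1) * (1 - z) * (2 - phi)) with ((1 - z) * (phi + 2 - phi * phi)) by ring.
    rewrite phi_sq. simpl. ring.
Qed.

Lemma face_hit_candidate y z s l :
  0 <= y < 1 -> 0 <= z < 1 -> 0 < s <= 2 -> line_hit y z s l ->
  In (s, l) (face_candidates y z).
Proof.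
  intros Hy Hz Hs [n Hn]. pose proof phi_bounds. pose proof phi_theta2 as E2.
  unfold theta1 in Hn. rewrite theta2_eq, theta3_eq in *. simpl.
  destruct l.
  - assert (n = 1%Z) as ->.
    { assert (0 < n)%Z by (apply lt_IZR; simpl; lra).
      assert (n <= 1)%Z by (apply le_IZR; simpl; lra). lia. }
    left. f_equal. simpl in Hn. lra.
  - assert (n = 1%Z \/ n = 2%Z) as [-> | ->].
    { assert (0 < n)%Z by (apply lt_IZR; simpl; nra).
      assert (n < 3)%Z by (apply lt_IZR; simpl; nra). lia. }
    + right; left. f_equal. simpl in Hn. nra.
    + right; right; left. f_equal. simpl in Hn. nra.
  - assert (n = 1%Z) as ->.
    { assert (0 < n)%Z by (apply lt_IZR; simpl; nra).
      assert (n < 2)%Z by (apply lt_IZR; simpl; nra). lia. }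
    right; right; right; left. f_equal. simpl in Hn. pose proof phi_sq. nra.
Qed.

Definition window_hits (y z : R) (ws : list (R * letter)) : Prop :=
  Sorted Rlt (0 :: map fst ws ++ [2]) /\
  (forall x, In x ws -> line_hit y z (fst x) (snd x)) /\
  (forall s l, line_hit y z s l -> 0 < s < 2 -> In (s, l) ws).

Lemma window_hits_of_candidates y z ws :
  0 <= y < 1 -> 0 <= z < 1 ->
  Sorted Rlt (0 :: map fst ws ++ [2]) ->
  incl ws (face_candidates y z) ->
  Forall (fun x => fst x < 2 -> In x ws) (face_candidates y z) ->
  window_hits y z ws.
Proof.
  intros Hy Hz Hsorted Hincl Hcover. repeat split.
  - exact Hsorted.
  - intros x Hx. apply face_candidate_hit, Hincl, Hx.
  - intros s l Hsl Hs. rewrite Forall_forall in Hcover.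
    apply (Hcover (s, l)); [apply face_hit_candidate; trivial; lra | exact (proj2 Hs)].
Qed.

Lemma Rlt_iff_of_scaled_diff a b c d e :
  0 < c -> a - b = c * (d - e) -> (a < b <-> d < e) /\ (b < a <-> e < d).
Proof. intros Hc E. split; split; intros; nra. Qed.

Lemma b2_time_vs_a_time y :
  (phi * (2 - y) < 2 <-> 4 - 2 * phi < y) /\ (2 < phi * (2 - y) <-> y < 4 - 2 * phi).
Proof.
  pose proof phi_bounds. pose proof phi_sq.
  apply (Rlt_iff_of_scaled_diff _ _ phi); nra.
Qed.

Lemma c_time_vs_a_time z :
  ((phi + 1) * (1 - z) < 2 <-> 2 * phi - 3 < z) /\ (2 < (phi + 1) * (1 - z) <-> z < 2 * phi - 3).
Proof.
  pose proof phi_bounds. pose proof phi_sq.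
  apply (Rlt_iff_of_scaled_diff _ _ (phi + 1)); nra.
Qed.

Lemma c_time_vs_b1_time y z :
  ((phi + 1) * (1 - z) < phi * (1 - y) <-> (2 - phi) + y / phi < z) /\
  (phi * (1 - y) < (phi + 1) * (1 - z) <-> z < (2 - phi) + y / phi).
Proof.
  pose proof phi_bounds. pose proof phi_sq. pose proof (f_equal (Rmult y) phi_sq).
  apply (Rlt_iff_of_scaled_diff _ _ (phi + 1)); rewrite ?div_phi; lra.
Qed.

Lemma c_time_vs_b2_time y z :
  ((phi + 1) * (1 - z) < phi * (2 - y) <-> (3 - 2 * phi) + y / phi < z) /\
  (phi * (2 - y) < (phi + 1) * (1 - z) <-> z < (3 - 2 * phi) + y / phi).
Proof.
  pose proof phi_bounds. pose proof phi_sq. pose proof (f_equal (Rmult y) phi_sq).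
  apply (Rlt_iff_of_scaled_diff _ _ (phi + 1)); rewrite ?div_phi; lra.
Qed.

Ltac window_from_candidates :=
  apply window_hits_of_candidates; trivial;
  [ simpl;
    repeat (apply Sorted_cons || apply Sorted_nil || apply HdRel_cons || apply HdRel_nil); lra
  | intros x; simpl; intuition
  | apply Forall_forall; intros x Hx; simpl in Hx; decompose [or False] Hx; subst x;
    simpl; intros; solve [auto | lra] ].

(* Selects the piece of [Phi_rel] whose inequalities are the time comparisons in context. *)
Ltac Phi_piece :=
  let solve_region :=
    repeat match goal with |- _ /\ _ => split end; first [reflexivity | tauto] in
  unfold Phi_rel, Rgt; split; [assumption | split; [assumption |]];
  repeat (first [left; solve [solve_region] | right]); solve_region.

Lemma face_return_word y z :
  0 <= y < 1 -> 0 <= z < 1 ->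
  (forall s l1 l2, 0 < s <= 2 -> line_hit y z s l1 -> line_hit y z s l2 -> l1 = l2) ->
  exists ws, window_hits y z ws /\ Phi_rel y z (la :: map snd ws).
Proof.
  intros Hy Hz Hfun. pose proof phi_bounds.
  pose proof (b2_time_vs_a_time y) as [Hb2a Hab2].
  pose proof (c_time_vs_a_time z) as [Hca Hac].
  pose proof (c_time_vs_b1_time y z) as [Hcb1 Hb1c].
  pose proof (c_time_vs_b2_time y z) as [Hcb2 Hb2c].
  assert (Htimes : 0 < phi * (1 - y) < phi * (2 - y) /\ phi * (1 - y) < 2 /\
                   0 < (phi + 1) * (1 - z)) by (repeat split; nra).
  assert (Hcoincide : forall s s' l l', s = s' -> 0 < s <= 2 -> l <> l' ->
            In (s, l) (face_candidates y z) -> In (s', l') (face_candidates y z) -> False).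
  { intros s s' l l' <- Hs Hl Hin Hin'. apply Hl, (Hfun s); trivial;
      apply (face_candidate_hit _ _ (s, _)); assumption. }
  destruct (Rtotal_order (phi * (2 - y)) 2) as [B2 | [B2 | B2]].
  2:{ exfalso; apply (Hcoincide _ _ lb la B2); solve [simpl; auto | lra | discriminate]. }
  - destruct (Rtotal_order ((phi + 1) * (1 - z)) 2) as [C | [C | C]].
    2:{ exfalso; apply (Hcoincide _ _ lc la C); solve [simpl; auto | lra | discriminate]. }
    + destruct (Rtotal_order ((phi + 1) * (1 - z)) (phi * (1 - y))) as [C1 | [C1 | C1]].
      2:{ exfalso; apply (Hcoincide _ _ lc lb C1); solve [simpl; auto | lra | discriminate]. }
      * exists [((phi + 1) * (1 - z), lc); (phi * (1 - y), lb); (phi * (2 - y), lb)].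
        split; [window_from_candidates | Phi_piece].
      * destruct (Rtotal_order ((phi + 1) * (1 - z)) (phi * (2 - y))) as [C2 | [C2 | C2]].
        2:{ exfalso; apply (Hcoincide _ _ lc lb C2); solve [simpl; auto | lra | discriminate]. }
        -- exists [(phi * (1 - y), lb); ((phi + 1) * (1 - z), lc); (phi * (2 - y), lb)].
           split; [window_from_candidates | Phi_piece].
        -- exists [(phi * (1 - y), lb); (phi * (2 - y), lb); ((phi + 1) * (1 - z), lc)].
           split; [window_from_candidates | Phi_piece].
    + exists [(phi * (1 - y), lb); (phi * (2 - y), lb)].
      split; [window_from_candidates | Phi_piece].
  - destruct (Rtotal_order ((phi + 1) * (1 - z)) 2) as [C | [C | C]].
    2:{ exfalso; apply (Hcoincide _ _ lc la C); solve [simpl; auto | lra | discriminate]. }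
    + destruct (Rtotal_order ((phi + 1) * (1 - z)) (phi * (1 - y))) as [C1 | [C1 | C1]].
      2:{ exfalso; apply (Hcoincide _ _ lc lb C1); solve [simpl; auto | lra | discriminate]. }
      * exists [((phi + 1) * (1 - z), lc); (phi * (1 - y), lb)].
        split; [window_from_candidates | Phi_piece].
      * exists [(phi * (1 - y), lb); ((phi + 1) * (1 - z), lc)].
        split; [window_from_candidates | Phi_piece].
    + exists [(phi * (1 - y), lb)].
      split; [window_from_candidates | Phi_piece].
Qed.

Lemma count_a_add (u : nat -> letter) p r :
  count_a u (p + r) = (count_a u p + length (filter is_a (map u (seq p r))))%nat.
Proof.
  unfold count_a. rewrite seq_app, filter_app, length_app, filter_map_swap, length_map.
  reflexivity.
Qed.

Lemma Phi_rel_count_a y z w : Phi_rel y z w -> length (filter is_a w) = 1%nat.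
Proof. intros (_ & _ & Hw). decompose [and or] Hw; subst w; reflexivity. Qed.

Section Billiard.

Variables (y z : R) (u : nat -> letter) (tau : nat -> R).
Hypothesis hwd : well_defined_orbit y z.
Hypothesis Henum : enumerates (hit y z) tau u.

Lemma hit_at_even_time (k : nat) : hit y z (2 * INR k) la.
Proof.
  pose proof (pos_INR k). split; [lra|].
  exists (Z.of_nat k). unfold theta1. rewrite <- INR_IZR_INZ. lra.
Qed.

Lemma letter_at_even_time p k : tau p = 2 * INR k -> u p = la.
Proof.
  intros Hp. destruct Henum as (_ & Hhit & _).
  apply (hwd (tau p)); [apply Hhit | rewrite Hp; apply hit_at_even_time].
Qed.

Lemma word_between_even_times p k :
  tau p = 2 * INR k ->
  exists r, tau (p + S r)%nat = 2 * INR (S k) /\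
    Phi_rel (frac_part (y + 2 * INR k * theta2)) (frac_part (z - 2 * INR k * theta2))
            (map u (seq p (S r))).
Proof.
  intros Hp. pose proof (pos_INR k) as Hk.
  set (y' := frac_part (y + 2 * INR k * theta2)).
  set (z' := frac_part (z - 2 * INR k * theta2)).
  assert (Hshift : forall s l, hit y z (2 * INR k + s) l <-> 0 <= 2 * INR k + s /\ line_hit y' z' s l).
  { intros s l. rewrite hit_line_hit, line_hit_shift. reflexivity. }
  destruct (face_return_word y' z') as (ws & (Hsorted & Hws & Hcomplete) & HPhi).
  - unfold y'. destruct (base_fp (y + 2 * INR k * theta2)). lra.
  - unfold z'. destruct (base_fp (z - 2 * INR k * theta2)). lra.
  - intros s l1 l2 Hs H1 H2. apply (hwd (2 * INR k + s)); apply Hshift; split; trivial; lra.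
  - assert (Hpos : forall x, In x ws -> 0 < fst x).
    { apply Sorted_extends in Hsorted; [|exact Rlt_trans]. rewrite Forall_forall in Hsorted.
      intros x Hx. apply Hsorted, in_or_app. left. apply in_map, Hx. }
    destruct (enum_window _ _ _ _ (enumerates_shift _ _ _ (2 * INR k) Henum) p 2 la ws)
      as [Hmap Hend]; cbn beta in *.
    + apply Hshift. split; [lra|]. apply (face_candidate_hit y' z' (2, la)). left; reflexivity.
    + replace (tau p - 2 * INR k) with 0 by lra. exact Hsorted.
    + intros x Hx. apply Hshift. split; [specialize (Hpos x Hx); lra | apply Hws, Hx].
    + intros t l Ht Hrange. apply Hshift in Ht. apply Hcomplete; [tauto | lra].
    + exists (length ws). split.
      * rewrite S_INR. replace (p + S (length ws))%nat with (S p + length ws)%nat by lia. lra.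
      * simpl. rewrite (letter_at_even_time p k Hp).
        rewrite <- Hmap, map_map in HPhi. exact HPhi.
Qed.

Lemma occ_a_at_even_time k : exists p, tau p = 2 * INR k /\ occ_a u p k.
Proof.
  induction k as [|k (p & Hp & _ & Hcount)].
  - exists 0%nat.
    assert (Htau0 : tau 0%nat = 2 * INR 0).
    { destruct Henum as (_ & Hhit & Hall).
      destruct (Hall _ _ (hit_at_even_time 0)) as (m & Hm & _).
      pose proof (enum_le _ _ _ _ Henum 0 m (Nat.le_0_l m)).
      destruct (Hhit 0%nat) as [Hnonneg _]. simpl in *. lra. }
    split; [exact Htau0 | split; [apply (letter_at_even_time 0 0 Htau0) | reflexivity]].
  - destruct (word_between_even_times p k Hp) as (r & Hq & HPhi).
    exists (p + S r)%nat. split; [exact Hq | split].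
    + apply (letter_at_even_time _ (S k) Hq).
    + rewrite count_a_add, (Phi_rel_count_a _ _ _ HPhi), Hcount. lia.
Qed.

End Billiard.

Theorem lemma5 (y z : R) (hy : 0 <= y < 1) (hz : 0 <= z < 1)
  (hwd : well_defined_orbit y z) (u : nat -> letter) (hu : billiard_word y z u) :
  forall k : nat,
    exists w : list letter,
      return_word u (S k) w /\
      Phi_rel (frac_part (y + 2 * INR k * theta2))
              (frac_part (z - 2 * INR k * theta2)) w.
Proof.
  intros k. destruct hu as [tau Henum].
  destruct (occ_a_at_even_time y z u tau hwd Henum k) as (p & Hp & Hocc).
  destruct (occ_a_at_even_time y z u tau hwd Henum (S k)) as (q & Hq & Hocc').
  destruct (word_between_even_times y z u tau hwd Henum p k Hp) as (r & Hr & HPhi).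
  assert (q = p + S r)%nat as -> by (apply (enum_inj _ _ _ _ Henum); congruence).
  exists (map u (seq p (S r))). split; [|exact HPhi].
  exists p, (p + S r)%nat. split; [|split; [exact Hocc'|]].
  - simpl. rewrite Nat.sub_0_r. exact Hocc.
  - do 2 f_equal. lia.
Qed.
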